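(* Let $\mathcal G=(\mathcal V,\mathcal E,W)$ be a network, $h^-\le h^+$ in $\mathbb R^{\mathcal V}$ and $\mathcal H=\prod_i[h_i^-,h_i^+]$. The following are equivalent: (a) the coordination game on $\mathcal G$ is $\mathcal H$-robustly unpolarizable (for every $h\in\mathcal H$ it has no equilibrium outside $\{\pm\mathbf 1\}$); (b) $\mathcal G$ is $\mathcal H$-robustly indecomposable (i.e., $h$-indecomposable for every $h\in\mathcal H$); (c) $\mathcal G$ is $(h^-,h^+)$-indecomposable.
   Context: A network is $\mathcal G=(\mathcal V,\mathcal E,W)$ with finite node set $\mathcal V$, links $\mathcal E\subseteq\mathcal V\times\mathcal V$, weight matrix $W\in\mathbb R_+^{\mathcal V\times\mathcal V}$ with zero diagonal, $W_{ij}>0$ iff $(i,j)\in\mathcal E$; for $\mathcal S\subseteq\mathcal V$, $w_i^{\mathcal S}=\sum_{j\in\mathcal S}W_{ij}$. $\mathcal X=\{-1,+1\}^{\mathcal V}$. Indecomposability: for $h^-\le h^+$, $\mathcal G$ is $(h^-,h^+)$-indecomposable if for every partition $\mathcal V=\mathcal V^+\cup\mathcal V^-$ into two disjoint nonempty sets there exist a sign $s\in\{-,+\}$ and a node $i\in\mathcal V^s$ with $w_i^{\mathcal V^s}+s\,h_i^s<w_i^{\mathcal V^{-s}}$ (here $s\,h_i^s$ means $+h_i^+$ if $s=+$ and $-h_i^-$ if $s=-$, and $-s$ is the opposite sign). $\mathcal G$ is $h$-indecomposable if it is $(h,h)$-indecomposable. Coordination game with external field $h$: players $\mathcal V$, actions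 $\{\pm1\}$, utilities $u_i(x)=x_i(\sum_jW_{ij}x_j+h_i)$; $x^*$ is an equilibrium if for every $i$, $x_i^*$ maximizes $u_i(\cdot,x^*_{-i})$ over $\{\pm1\}$. *)

From HB Require Import structures.
From mathcomp Require Import all_boot all_order all_algebra.
Set Implicit Arguments. Unset Strict Implicit. Unset Printing Implicit Defensive.
Import Order.TTheory GRing.Theory Num.Theory.
Local Open Scope ring_scope.

Section Defs.
Variables (R : realFieldType) (V : finType).

(* Network weights: W i j > 0 iff (i,j) is a link; zero diagonal, nonnegative. *)
Definition network (W : V -> V -> R) : Prop :=
  (forall i, W i i = 0) /\ (forall i j, 0 <= W i j).

Definition wdeg (W : V -> V -> R) (i : V) (S : {set V}) : R :=
  \sum_(j in S) W i j.

Definition indecomposable2 (W : V -> V -> R) (hm hp : V -> R) : Prop :=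
  forall Vp : {set V}, Vp != set0 -> ~: Vp != set0 ->
    (exists2 i, i \in Vp & wdeg W i Vp + hp i < wdeg W i (~: Vp)) \/
    (exists2 i, i \in ~: Vp & wdeg W i (~: Vp) - hm i < wdeg W i Vp).

Definition indecomposable (W : V -> V -> R) (h : V -> R) : Prop :=
  indecomposable2 W h h.

Definition is_config (x : V -> R) : Prop := forall i, x i = 1 \/ x i = -1.

Definition utility (W : V -> V -> R) (h : V -> R) (i : V) (x : V -> R) : R :=
  x i * (\sum_j W i j * x j + h i).

Definition upd (x : V -> R) (i : V) (a : R) : V -> R :=
  fun j => if j == i then a else x j.

Definition equilibrium (W : V -> V -> R) (h : V -> R) (x : V -> R) : Prop :=
  is_config x /\
  forall i (a : R), (a = 1 \/ a = -1) ->
    utility W h i (upd x i a) <= utility W h i x.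

Definition in_box (hm hp h : V -> R) : Prop := forall i, hm i <= h i <= hp i.

Definition robustly_unpolarizable (W : V -> V -> R) (hm hp : V -> R) : Prop :=
  forall h, in_box hm hp h -> forall x, equilibrium W h x ->
    (forall i, x i = 1) \/ (forall i, x i = -1).

Definition robustly_indecomposable (W : V -> V -> R) (hm hp : V -> R) : Prop :=
  forall h, in_box hm hp h -> indecomposable W h.

End Defs.

From HB Require Import structures.
From mathcomp Require Import all_boot all_order all_algebra.
From mathcomp Require Import lra.
Set Implicit Arguments. Unset Strict Implicit. Unset Printing Implicit Defensive.
Import Order.TTheory GRing.Theory Num.Theory.
Local Open Scope ring_scope.

(* Every configuration x in {-1,+1}^V is the sign pattern of the
   set S = {i | x_i = +1}, and the local field of node i is then
   w_i^S - w_i^{~S} + h_i.  Hence x is an equilibrium exactly when no node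
   wants to switch sides, i.e. when the partition (S, ~S) is "cohesive":
   w_i^{~S} <= w_i^S + h_i on S and w_i^S <= w_i^{~S} - h_i on ~S.
   On the other hand (h^-,h^+)-indecomposability says precisely that no
   nontrivial partition is cohesive for the pair of fields (h^-, h^+).
   So (a) <-> (b) holds field by field: nonconsensus equilibria are the same
   as nontrivial cohesive partitions.  For (b) <-> (c), cohesiveness is
   monotone in the fields, so a partition cohesive for some h in the box is
   cohesive for (h^-,h^+); conversely a partition S cohesive for (h^-,h^+)
   is cohesive for the single field equal to h^+ on S and h^- off S. *)

Section Cohesive.
Variables (R : realFieldType) (V : finType) (W : V -> V -> R).

Definition sign_config (S : {set V}) : V -> R :=
  fun j => if j \in S then 1 else -1.

Definition cohesive (hm hp : V -> R) (S : {set V}) : Prop :=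
  (forall i, i \in S -> wdeg W i (~: S) <= wdeg W i S + hp i) /\
  (forall i, i \in ~: S -> wdeg W i S <= wdeg W i (~: S) - hm i).

Lemma indecomposable2P (hm hp : V -> R) :
  indecomposable2 W hm hp <->
  forall S : {set V}, S != set0 -> ~: S != set0 -> ~ cohesive hm hp S.
Proof.
split=> [indec S nS nSc [cohS cohSc] | noCoh S nS nSc].
  case: (indec S nS nSc) => [[i iS lt] | [i iSc lt]].
  - by have := cohS i iS; rewrite leNgt lt.
  - by have := cohSc i iSc; rewrite leNgt lt.
case: (boolP [exists i in S, wdeg W i S + hp i < wdeg W i (~: S)]).
  by case/exists_inP => i iS lt; left; exists i.
case: (boolP [exists i in ~: S, wdeg W i (~: S) - hm i < wdeg W i S]).
  by case/exists_inP => i iSc lt; right; exists i.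
move=> /exists_inPn noSc /exists_inPn noS; exfalso; apply: (noCoh S nS nSc).
by split=> i iT; rewrite leNgt; [exact: noS | exact: noSc].
Qed.

Lemma cohesive_widen (hm hp h : V -> R) (S : {set V}) :
  in_box hm hp h -> cohesive h h S -> cohesive hm hp S.
Proof.
move=> hb [cohS cohSc]; split=> i iT.
- by have := cohS i iT; have /andP[_ hhp] := hb i; lra.
- by have := cohSc i iT; have /andP[hmh _] := hb i; lra.
Qed.

Lemma cohesive_split_field (hm hp : V -> R) (S : {set V}) :
  let hS := fun i => if i \in S then hp i else hm i in
  cohesive hm hp S -> cohesive hS hS S.
Proof.
move=> hS [cohS cohSc]; split=> i iT; rewrite /hS.
- by rewrite iT; exact: cohS.
- by move: (iT); rewrite in_setC => /negbTE ->; exact: cohSc.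
Qed.

Lemma split_field_in_box (hm hp : V -> R) (S : {set V}) :
  (forall i, hm i <= hp i) ->
  in_box hm hp (fun i => if i \in S then hp i else hm i).
Proof. by move=> hmp i; case: (i \in S); rewrite lexx ?hmp. Qed.

Lemma sum_sign_config (S : {set V}) (i : V) :
  \sum_j W i j * sign_config S j = wdeg W i S - wdeg W i (~: S).
Proof.
rewrite (bigID (mem S)) /= /wdeg -sumrN; congr (_ + _).
  by apply: eq_bigr => j jS; rewrite /sign_config jS mulr1.
apply: eq_big => [j | j jSc]; first by rewrite in_setC.
by rewrite /sign_config (negbTE jSc) mulrN1.
Qed.

Lemma config_sign_config (x : V -> R) :
  is_config x -> x =1 sign_config [set i | x i == 1].
Proof.
move=> cx j; rewrite /sign_config inE.
by case: (cx j) => ->; rewrite ?eqxx // -subr_eq0 (_ : -1 - 1 = -2 :> R);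
  [rewrite oppr_eq0 pnatr_eq0 | lra].
Qed.

Lemma consensus_sign_config (x : V -> R) (S : {set V}) :
  x =1 sign_config S ->
  ((forall i, x i = 1) \/ (forall i, x i = -1)) <-> (S = set0 \/ ~: S = set0).
Proof.
move=> hx; split=> [[all1 | allm1] | [S0 | Sc0]].
- right; apply/setP => j; rewrite !inE; case: (boolP (j \in S)) => // jS.
  by have := all1 j; rewrite hx /sign_config (negbTE jS); lra.
- left; apply/setP => j; rewrite !inE; case: (boolP (j \in S)) => // jS.
  by have := allm1 j; rewrite hx /sign_config jS; lra.
- by right => i; rewrite hx /sign_config S0 in_set0.
- left => i; rewrite hx /sign_config.
  by have := in_set0 i; rewrite -Sc0 in_setC => /negbFE ->.
Qed.

Hypothesis W_network : network W.

(* Only the sign of the local field matters for a best response; the zero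
   diagonal makes the field independent of the node's own action. *)
Lemma equilibriumE (h x : V -> R) : is_config x ->
  equilibrium W h x <-> forall i, 0 <= x i * (\sum_j W i j * x j + h i).
Proof.
move=> cx; have [W0 _] := W_network.
have utility_upd i a :
    utility W h i (upd x i a) = a * (\sum_j W i j * x j + h i).
  rewrite /utility /upd eqxx; congr (_ * (_ + _)); apply: eq_bigr => j _.
  by case: eqP => [-> | //]; rewrite W0 !mul0r.
rewrite /equilibrium; split=> [[_ best] i | nonneg].
  have flip : - x i = 1 \/ - x i = -1.
    by case: (cx i) => ->; [right | left; rewrite opprK].
  have := best i _ flip; rewrite utility_upd /utility mulNr.
  by move: (x i * _) => P; lra.
split=> // i a ha; rewrite utility_upd /utility; have := nonneg i.
by set F := _ + h i; case: (cx i) => ->; case: ha => ->; lra.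
Qed.

Lemma equilibrium_cohesive (h x : V -> R) (S : {set V}) :
  x =1 sign_config S -> equilibrium W h x <-> cohesive h h S.
Proof.
move=> hx; have cx : is_config x.
  by move=> j; rewrite hx /sign_config; case: (j \in S); [left | right].
have field i : \sum_j W i j * x j = wdeg W i S - wdeg W i (~: S).
  by rewrite -sum_sign_config; apply: eq_bigr => j _; rewrite hx.
rewrite equilibriumE //; split=> [nonneg | [cohS cohSc] i].
  split=> i iT; have := nonneg i; rewrite field hx /sign_config.
  - by rewrite iT; lra.
  - by move: iT; rewrite in_setC => /negbTE ->; lra.
rewrite field hx /sign_config; case: (boolP (i \in S)) => iS.
- by have := cohS i iS; lra.
- by have := cohSc i; rewrite in_setC iS => /(_ isT); lra.
Qed.

Lemma unpolarizable_indecomposable (h : V -> R) :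
  (forall x, equilibrium W h x -> (forall i, x i = 1) \/ (forall i, x i = -1))
  <-> indecomposable W h.
Proof.
rewrite /indecomposable indecomposable2P.
split=> [unpol S nS nSc /(equilibrium_cohesive h (frefl (sign_config S))) eqS |
         indec x eqx].
  have /(consensus_sign_config (frefl (sign_config S))) [S0 | Sc0] := unpol _ eqS.
  - by rewrite S0 eqxx in nS.
  - by rewrite Sc0 eqxx in nSc.
have hx := config_sign_config (proj1 eqx); set S := [set i | _] in hx.
apply/(consensus_sign_config hx).
have [S0 | nS] := eqVneq S set0; first by left.
have [Sc0 | nSc] := eqVneq (~: S) set0; first by right.
by case: (indec S nS nSc); apply/(equilibrium_cohesive h hx).
Qed.

End Cohesive.

Theorem theorem3 (R : realFieldType) (V : finType) (W : V -> V -> R)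
  (hm hp : V -> R) :
  network W -> (forall i, hm i <= hp i) ->
  (robustly_unpolarizable W hm hp <-> robustly_indecomposable W hm hp) /\
  (robustly_indecomposable W hm hp <-> indecomposable2 W hm hp).
Proof.
move=> nW hmp; split; split.
- by move=> unpol h hb; apply/(unpolarizable_indecomposable nW); exact: unpol.
- by move=> indec h hb; apply/(unpolarizable_indecomposable nW); exact: indec.
- move=> rob; apply/indecomposable2P => S nS nSc /cohesive_split_field coh.
  by move: (rob _ (split_field_in_box S hmp)) => /indecomposable2P/(_ S nS nSc).
- move=> indec h hb; apply/indecomposable2P => S nS nSc cohS.
  by move: indec => /indecomposable2P/(_ S nS nSc); apply; exact: cohesive_widen cohS.
Qed.
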